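(* Let $k\ge1$ and $0\le r<k$ be integers. Then for every $n\ge1$, $$\sum_{j=0}^n(-1)^j\binom{r+1}{j}F^{(k)}_{k(n-j)+r}(x)=x^{r+1}F^{(k)}_{kn-1}(x),$$ and for every $n\ge1$ and every integer $i$ with $0<i<k+n$, $$\sum_{j=0}^{n-1}(-1)^{n-1-j}\binom{i-k+r}{n-1-j}x^kF^{(k)}_{kj+r}(x)=x^{r+i}F^{(k)}_{kn-i}(x).$$
   Context: Binomial coefficients are the generalized ones: for an integer $m$ (possibly negative) and an integer $j$, $\binom{m}{j}=\frac{m(m-1)\cdots(m-j+1)}{j!}$ if $j\ge 0$ and $\binom{m}{j}=0$ if $j<0$. For an integer $k\ge1$, the generalized Fibonacci polynomials $F^{(k)}_n(x)\in\mathbb{Z}[x]$ ($n\ge0$) are defined by $F^{(k)}_n(x)=x^n$ for $0\le n<k$ and $F^{(k)}_n(x)=xF^{(k)}_{n-1}(x)+F^{(k)}_{n-k}(x)$ for $n\ge k$. *)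

From HB Require Import structures.
From mathcomp Require Import all_boot all_order all_algebra.
Set Implicit Arguments. Unset Strict Implicit. Unset Printing Implicit Defensive.
Import Order.TTheory GRing.Theory Num.Theory.
Local Open Scope ring_scope.

(* The division is exact; we use
   integer division divz. (For j < 0 the paper sets it to 0; only j >= 0
   occurs in the statement.) *)
Definition genbin (m : int) (j : nat) : int :=
  ((\prod_(t < j) (m - t%:Z)) %/ (j`!)%:Z)%Z.

Fixpoint Faux (k fuel n : nat) : {poly int} :=
  match fuel with
  | 0 => 0
  | fuel'.+1 =>
      if (n < k)%N then 'X^n
      else 'X * Faux k fuel' n.-1 + Faux k fuel' (n - k)%N
  end.

Definition Fib (k n : nat) : {poly int} := Faux k n.+1 n.

(* Both identities are instances of one statement about the binomial transform
   [T_s(n) = \sum_(j <= n) (-1)^j binom(s, j) a(n - j)] of the sequence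
   [a(j) = F_(kj + r)]: for [0 < i <= k + n],
   [x^k T_(i-k+r)(n) = x^(r+i) F_(kn+k-i)].  Pascal's rule gives
   [T_(s+1)(n+1) = T_s(n+1) - T_s(n)], and the right-hand side obeys the same
   recurrence because of [F_N = x F_(N-1) + F_(N-k)].  So, by induction on [n],
   the identity propagates in both directions along [i] from [i = k - r], where
   [s = 0] and [T_0(n) = a(n)].  The first identity is the case [i = k + 1]
   with the factor [x^k] cancelled; the second is the case [n - 1], summed in
   reverse order. *)
From HB Require Import structures.
From mathcomp Require Import all_boot all_order all_algebra.
From mathcomp Require Import ring zify.
Set Implicit Arguments. Unset Strict Implicit. Unset Printing Implicit Defensive.
Import Order.TTheory GRing.Theory Num.Theory.
Local Open Scope ring_scope.

Definition ffactz (m : int) (j : nat) : int := \prod_(t < j) (m - t%:Z).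

Lemma ffactzS (m : int) (j : nat) :
  ffactz (m + 1) j.+1 = ffactz m j.+1 + (j.+1)%:Z * ffactz m j.
Proof.
rewrite /ffactz big_ord_recl big_ord_recr /=.
rewrite (eq_bigr (fun t : 'I_j => m - t%:Z)) => [|t _]; last first.
  by rewrite /bump /= add1n intS; ring.
set P := \prod_(t < j) _; ring.
Qed.

Lemma dvdz_fact_ffactz (m : int) (j : nat) : ((j`!)%:Z %| ffactz m j)%Z.
Proof.
elim: j m => [|j IHj] m; first by rewrite /ffactz big_ord0 fact0 dvdz1.
have dvd_last m' : ((j.+1`!)%:Z %| (j.+1)%:Z * ffactz m' j)%Z.
  by rewrite factS PoszM dvdz_mul.
(* Pascal's rule makes divisibility independent of [m]; at [m = 0] the
   product vanishes. *)
have dvd_shift m' : ((j.+1`!)%:Z %| ffactz (m' + 1) j.+1)%Z =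
                    ((j.+1`!)%:Z %| ffactz m' j.+1)%Z.
  by rewrite ffactzS rpredDr.
elim/int_ind: m => [|p|p]; first by rewrite /ffactz big_ord_recl mul0r dvdz0.
- by move=> dvd_p; rewrite intS addrC dvd_shift.
- by move=> dvd_p; rewrite -dvd_shift intS opprD addrAC addNr add0r.
Qed.

Lemma genbinE (m : int) (j : nat) : genbin m j * (j`!)%:Z = ffactz m j.
Proof. by rewrite divzK // dvdz_fact_ffactz. Qed.

Lemma genbin0 (m : int) : genbin m 0 = 1.
Proof. by rewrite /genbin /ffactz big_ord0 divzz. Qed.

Lemma genbin0S (j : nat) : genbin 0 j.+1 = 0.
Proof. by rewrite /genbin big_ord_recl subr0 mul0r div0z. Qed.

Lemma genbinS (m : int) (j : nat) :
  genbin (m + 1) j.+1 = genbin m j.+1 + genbin m j.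
Proof.
apply: (mulIf (x := (j.+1`!)%:Z)); first by rewrite eqz_nat -lt0n fact_gt0.
by rewrite mulrDl !genbinE ffactzS factS PoszM mulrCA genbinE mulrC.
Qed.

Section BinomialTransform.
Variable V : zmodType.
Implicit Types (a : nat -> V) (s : int) (n : nat).

Definition bintrans a s n : V :=
  \sum_(j < n.+1) a (n - j)%N *~ ((-1) ^+ j * genbin s j).

Lemma bintrans_n0 a s : bintrans a s 0 = a 0%N.
Proof. by rewrite /bintrans big_ord1 genbin0 mulr1. Qed.

Lemma bintrans0 a n : bintrans a 0 n = a n.
Proof.
rewrite /bintrans big_ord_recl genbin0 mulr1 subn0 big1 ?addr0 // => j _.
by rewrite genbin0S mulr0.
Qed.

Lemma bintransS a s n : bintrans a s n.+1 =
  a n.+1 + \sum_(j < n.+1) a (n - j)%N *~ ((-1) ^+ j.+1 * genbin s j.+1).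
Proof. by rewrite /bintrans big_ord_recl genbin0 mulr1 subn0. Qed.

Lemma bintrans_pascal a s n :
  bintrans a (s + 1) n.+1 = bintrans a s n.+1 - bintrans a s n.
Proof.
have summand j : a (n - j)%N *~ ((-1) ^+ j.+1 * genbin (s + 1) j.+1) =
    a (n - j)%N *~ ((-1) ^+ j.+1 * genbin s j.+1)
    - a (n - j)%N *~ ((-1) ^+ j * genbin s j).
  by rewrite genbinS mulrDr [in X in _ + X]exprS mulN1r mulNr mulrzDr mulrNz.
rewrite !bintransS; under eq_bigr => j _ do rewrite summand.
by rewrite sumrB addrA.
Qed.

End BinomialTransform.

Lemma bintrans_polyC (a : nat -> {poly int}) (s : int) (n : nat) :
  bintrans a s n = \sum_(j < n.+1) ((-1) ^+ j * genbin s j)%:P * a (n - j)%N.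
Proof. by apply: eq_bigr => j _; rewrite mul_polyC -scaler_int intz. Qed.

Lemma nat_interval_ind (P : nat -> Prop) (lo hi i0 : nat) :
  (lo <= i0 <= hi)%N -> P i0 ->
  (forall i, (lo <= i < hi)%N -> P i <-> P i.+1) ->
  forall i, (lo <= i <= hi)%N -> P i.
Proof.
move=> /andP[lo_i0 i0_hi] P_i0 PS i /andP[lo_i i_hi].
case: (leqP i0 i) => [le_i0_i | lt_i_i0].
  have up d : (i0 + d <= hi)%N -> P (i0 + d)%N.
    elim: d => [|d IHd] le_hi; first by rewrite addn0.
    by rewrite addnS; apply/(PS _ _).1; [lia | apply: IHd; lia].
  by rewrite -(subnKC le_i0_i); apply: up; lia.
have down d : (d <= i0 - lo)%N -> P (i0 - d)%N.
  elim: d => [|d IHd] le_lo; first by rewrite subn0.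
  apply/(PS _ _).2; first by lia.
  have -> : ((i0 - d.+1).+1 = i0 - d)%N by lia.
  by apply: IHd; lia.
by have := down (i0 - i)%N; rewrite subKn; [apply; lia | lia].
Qed.

Lemma Faux_fuel (k f1 f2 n : nat) :
  (1 <= k)%N -> (n < f1)%N -> (n < f2)%N -> Faux k f1 n = Faux k f2 n.
Proof.
move=> k_gt0; elim: f1 f2 n => [|f1 IH] [|f2] n //= n_lt1 n_lt2.
by case: ifP => // n_ge_k; rewrite (IH f2) ?(IH f2 (n - k)%N) //; lia.
Qed.

Lemma Fib_small (k n : nat) : (n < k)%N -> Fib k n = 'X^n.
Proof. by move=> n_lt_k; rewrite /Fib /= n_lt_k. Qed.

Lemma Fib_rec (k n : nat) : (1 <= k)%N -> (k <= n)%N ->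
  Fib k n = 'X * Fib k n.-1 + Fib k (n - k)%N.
Proof.
move=> k_gt0 k_le_n; rewrite /Fib /= ltnNge k_le_n /=.
by rewrite (@Faux_fuel k n n.-1.+1) ?(@Faux_fuel k n (n - k).+1) //; lia.
Qed.

Section FibonacciTransform.
Variables k r : nat.
Hypothesis k_gt0 : (1 <= k)%N.
Hypothesis r_lt_k : (r < k)%N.

Local Notation a := (fun j => Fib k (k * j + r)%N).

Lemma Xn_bintrans_Fib (n i : nat) : (0 < i <= k + n)%N ->
  'X^k * bintrans a (i%:Z - k%:Z + r%:Z) n = 'X^(r + i) * Fib k (k * n + k - i)%N.
Proof.
elim: n i => [|n IHn] i.
  move=> /andP[i_gt0 i_le]; rewrite bintrans_n0 muln0 add0n !Fib_small; try lia.
  by rewrite -!exprD; congr ('X^_); lia.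
move: i; apply: (@nat_interval_ind _ 1 (k + n.+1) (k - r)); first lia.
  have -> : (k - r)%N%:Z - k%:Z + r%:Z = 0 by lia.
  rewrite bintrans0; congr (_ * Fib k _); [congr ('X^_) | ]; lia.
move=> j /andP[j_gt0 j_lt]; have n_le_kn := leq_pmull n k_gt0.
have -> : (j.+1)%:Z - k%:Z + r%:Z = (j%:Z - k%:Z + r%:Z) + 1 by lia.
rewrite bintrans_pascal mulrBr IHn; last by lia.
rewrite (@Fib_rec k (k * n.+1 + k - j)) //; last by rewrite mulnS; lia.
have -> : ((k * n.+1 + k - j).-1 = k * n.+1 + k - j.+1)%N by rewrite mulnS; lia.
have -> : ((k * n.+1 + k - j) - k = k * n + k - j)%N by rewrite mulnS; lia.
rewrite addnS mulrDr mulrA -exprSr.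
by split => [-> | <-]; rewrite ?addrK ?subrK.
Qed.

End FibonacciTransform.

Theorem lemma10 (k r : nat) (hk : (1 <= k)%N) (hr : (r < k)%N) :
  forall n : nat, (1 <= n)%N ->
    (\sum_(0 <= j < n.+1)
        ((-1) ^+ j * genbin (r.+1)%:Z j)%:P * Fib k (k * (n - j) + r)%N
      = 'X^(r.+1) * Fib k (k * n - 1)%N)
    /\
    (forall i : nat, (0 < i)%N -> (i < k + n)%N ->
      \sum_(0 <= j < n)
        ((-1) ^+ (n - 1 - j)%N * genbin (i%:Z - k%:Z + r%:Z) (n - 1 - j)%N)%:P
          * ('X^k * Fib k (k * j + r)%N)
      = 'X^(r + i)%N * Fib k (k * n - i)%N).
Proof.
move=> n n_gt0; split.
  have k1_range : (0 < k.+1 <= k + n)%N by rewrite ltn0Sn -addn1 leq_add2l.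
  have := Xn_bintrans_Fib hk hr k1_range.
  have -> : (k.+1)%:Z - k%:Z + r%:Z = (r.+1)%:Z by lia.
  have -> : (r + k.+1 = k + r.+1)%N by lia.
  rewrite bintrans_polyC big_mkord exprD -mulrA.
  move=> /(mulfI (expf_neq0 k (negbT (polyX_eq0 int)))) ->.
  by congr (_ * Fib k _); lia.
move=> i i_gt0 i_lt; case: n n_gt0 i_lt => // n _ i_lt.
have i_range : (0 < i <= k + n)%N by rewrite i_gt0 -ltnS -addnS.
have := Xn_bintrans_Fib hk hr i_range.
have -> : (k * n + k - i = k * n.+1 - i)%N by rewrite mulnS; lia.
rewrite bintrans_polyC mulr_sumr => <-.
rewrite big_nat_rev big_mkord add0n; apply: eq_bigr => j _.
have -> : (n.+1 - 1 - (n.+1 - j.+1) = j)%N by have := ltn_ord j; lia.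
by rewrite mulrCA subSS.
Qed.
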